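(* Let $d$ be an integer with $1\le d\le q$. Then $$e_1(d,m)>e_2(d,m)>\dots>e_{\binom{m+d}{d}}(d,m)=0.$$
   Context: $q$ is a prime power, $\mathbb{F}_q$ the finite field with $q$ elements, $m$ a positive integer. $e_r(d,m)$ is the maximum, over all families of $r$ linearly independent homogeneous polynomials of degree $d$ in $\mathbb{F}_q[x_0,\dots,x_m]$, of the number of points of $\mathbb{P}^m(\mathbb{F}_q)$ at which all of them vanish. *)

From HB Require Import structures.
From mathcomp Require Import all_boot all_order all_algebra all_field.
From mathcomp Require Import mpoly.
From Stdlib Require Import ClassicalEpsilon.
Set Implicit Arguments. Unset Strict Implicit. Unset Printing Implicit Defensive.
Import Order.TTheory GRing.Theory.
Local Open Scope ring_scope.

Definition pbool (P : Prop) : bool :=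
  if excluded_middle_informative P then true else false.

(* Points of P^m(F): canonical representatives of the lines of F^(m+1),
   i.e. nonzero vectors whose first nonzero coordinate equals 1. *)
Definition proj_normalized (F : finFieldType) (m : nat)
    (x : {ffun 'I_m.+1 -> F}) : bool :=
  [exists i : 'I_m.+1,
     (x i == 1) && [forall j : 'I_m.+1, (j < i)%N ==> (x j == 0)]].

Definition homog_family (F : finFieldType) (m d r : nat)
    (f : 'I_r -> {mpoly F[m.+1]}) : Prop :=
  forall i, f i \is d.-homog.

Definition lin_indep (F : finFieldType) (m r : nat)
    (f : 'I_r -> {mpoly F[m.+1]}) : Prop :=
  forall c : 'I_r -> F, \sum_(i < r) c i *: f i = 0 -> forall i, c i = 0.

Definition nb_common_zeros (F : finFieldType) (m r : nat)
    (f : 'I_r -> {mpoly F[m.+1]}) : nat :=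
  #|[set x : {ffun 'I_m.+1 -> F} |
      proj_normalized x && [forall i : 'I_r, (f i).@[x] == 0]]|.

Definition achievable (F : finFieldType) (m d r k : nat) : Prop :=
  exists f : 'I_r -> {mpoly F[m.+1]},
    [/\ homog_family d f, lin_indep f & nb_common_zeros f = k].

(* e_r(d,m): the maximum of the achievable values (all of them are bounded by
   #|F|^(m+1), the number of vectors of F^(m+1)). *)
Definition e_max (F : finFieldType) (r d m : nat) : nat :=
  \max_(k < (#|F| ^ m.+1).+1 | pbool (achievable F m d r k)) k.

(* If f_0, ..., f_r are linearly independent forms of degree d <= q, then f_0
   does not vanish at some point x of P^m: replacing every X_i^q by X_i turns a
   nonzero form of degree <= q into a nonzero polynomial of degree < q in each
   variable, and such a polynomial cannot vanish on all of F^(m+1).  The r forms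
   f_i - (f_i(x) / f_0(x)) f_0 are still independent and vanish at x and at
   every common zero of the f_i, hence e_(r+1) < e_r.  Finally 'C(m + d, d)
   independent forms span all forms of degree d, and X_i^d does not vanish at a
   point with x_i = 1, so they have no common zero. *)
From HB Require Import structures.
From mathcomp Require Import all_boot all_order all_algebra all_field.
From mathcomp Require Import mpoly.
From Stdlib Require Import ClassicalEpsilon.
Set Implicit Arguments. Unset Strict Implicit. Unset Printing Implicit Defensive.
Import Order.TTheory GRing.Theory.
Local Open Scope ring_scope.

Section MuniEval.
Variables (R : comNzRingType) (n : nat).

(* [muni] splits off the last variable; [mnmdrop] and [vext] are the matching
   operations on monomials and on points. *)

Definition mnmdrop (m : 'X_{1..n.+1}) : 'X_{1..n} :=
  [multinom m (widen_ord (leqnSn n) i) | i < n].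

Definition vext (y : 'I_n -> R) (t : R) (i : 'I_n.+1) : R :=
  if unlift ord_max i is Some j then y j else t.

Lemma vext_widen y t i : vext y t (widen_ord (leqnSn n) i) = y i.
Proof.
have -> : widen_ord (leqnSn n) i = lift ord_max i.
  by apply: val_inj; rewrite /= /bump leqNgt ltn_ord.
by rewrite /vext liftK.
Qed.

Lemma vext_max y t : vext y t ord_max = t.
Proof. by rewrite /vext unlift_none. Qed.

Lemma mnmdrop_inj (m1 m2 : 'X_{1..n.+1}) :
  m1 ord_max = m2 ord_max -> mnmdrop m1 = mnmdrop m2 -> m1 = m2.
Proof.
move=> eq_max /mnmP eq_drop; apply/mnmP => i.
case: (unliftP ord_max i) => [j ->|-> //].
have -> : lift ord_max j = widen_ord (leqnSn n) j.
  by apply: val_inj; rewrite /= /bump leqNgt ltn_ord.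
by have := eq_drop j; rewrite !mnmE.
Qed.

Lemma muniX (m : 'X_{1..n.+1}) :
  muni 'X_[m] = 'X_[mnmdrop m]%:P * 'X^(m ord_max) :> {poly {mpoly R[n]}}.
Proof. by rewrite muniE msuppX big_seq1 mcoeffX eqxx scale1r mul_polyC. Qed.

Lemma coef_muni (p : {mpoly R[n.+1]}) k :
  (muni p)`_k = \sum_(m <- msupp p | m ord_max == k) p@_m *: 'X_[mnmdrop m].
Proof.
rewrite muniE coef_sum [RHS]big_mkcond /=; apply: eq_bigr => m _.
by rewrite !coefZ coefXn eq_sym; case: eqP; rewrite ?mulr1 ?mulr0.
Qed.

Lemma mcoeff_coef_muni (p : {mpoly R[n.+1]}) m :
  ((muni p)`_(m ord_max))@_(mnmdrop m) = p@_m.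
Proof.
rewrite coef_muni [in RHS](mpolyE p) !raddf_sum big_mkcond /=.
apply: eq_bigr => m' _; rewrite !mcoeffZ !mcoeffX.
have [eq_max|neq_max] := eqVneq (m' ord_max) (m ord_max).
  suff -> : (mnmdrop m' == mnmdrop m) = (m' == m) by [].
  by apply/idP/idP => [/eqP/(mnmdrop_inj eq_max)->|/eqP->].
by case: eqP => [eq_m|]; [rewrite eq_m eqxx in neq_max | rewrite mulr0].
Qed.

Lemma meval_vext (p : {mpoly R[n.+1]}) y t :
  p.@[vext y t] = (map_poly (meval y) (muni p)).[t].
Proof.
elim/mpolyind: p => [|c m p _ _ IHp]; first by rewrite meval0 muni0 rmorph0 horner0.
rewrite mevalD muniD rmorphD hornerD IHp; congr (_ + _).
rewrite muniZ muniX mevalZ mevalX -mul_polyC !rmorphM /= !map_polyC /= map_polyXn.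
rewrite !hornerE mevalC mevalX big_ord_recr /= vext_max mulrA.
by congr (_ * _ * _); apply: eq_bigr => i _; rewrite vext_widen mnmE.
Qed.
End MuniEval.

Section VanishingOnGrid.
Variables (R : idomainType) (S : seq R).
Hypothesis S_uniq : uniq S.

Definition mexps_lt k n (p : {mpoly R[n]}) :=
  forall m, m \in msupp p -> forall i, (m i < k)%N.

Lemma mexps_lt_coef_muni k n (p : {mpoly R[n.+1]}) j :
  mexps_lt k p -> mexps_lt k ((muni p)`_j).
Proof.
move=> p_lt m' + i; rewrite mcoeff_msupp; apply: contraTT; rewrite -leqNgt => k_le.
rewrite coef_muni raddf_sum big1_seq ?eqxx //= => m /andP [_ m_p].
rewrite mcoeffZ mcoeffX; case: eqP => [eq_m'|]; last by rewrite mulr0.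
by move: k_le; rewrite -eq_m' mnmE leqNgt p_lt.
Qed.

Lemma size_muni_leq k n (p : {mpoly R[n.+1]}) :
  mexps_lt k p -> (size (muni p) <= k)%N.
Proof.
move=> p_lt; apply/leq_sizeP => j k_le; rewrite coef_muni big1_seq //.
move=> m /andP [/eqP eq_j m_p]; move: k_le; rewrite -eq_j leqNgt.
by rewrite p_lt.
Qed.

Lemma mpoly_grid_vanishing_eq0 n (p : {mpoly R[n]}) :
  mexps_lt (size S) p -> (forall x, (forall i, x i \in S) -> p.@[x] = 0) ->
  p = 0.
Proof.
elim: n p => [|n IHn] p p_lt p_vanish.
  have p_const : p = (p@_0)%:MP.
    apply/mpolyP => m; rewrite mcoeffC (_ : m = 0%MM) ?eqxx ?mulr1 //.
    by apply/mnmP => -[].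
  by rewrite p_const -(@mevalC 0 _ (fun=> 0) p@_0) -p_const p_vanish // => -[].
suff muni_coef0 j : (muni p)`_j = 0.
  by apply/mpolyP => m; rewrite -mcoeff_coef_muni muni_coef0 !mcoeff0.
apply: IHn; first exact: mexps_lt_coef_muni.
move=> y y_S; rewrite -coef_map.
suff -> : map_poly (meval y) (muni p) = 0 by rewrite coef0.
apply: (roots_geq_poly_eq0 _ S_uniq).
  apply/allP => t t_S; rewrite /root -meval_vext p_vanish // => i.
  by rewrite /vext; case: unliftP.
apply: leq_trans (size_poly _ _) (size_muni_leq p_lt).
Qed.

End VanishingOnGrid.

Lemma mnm_concentrated n (m : 'X_{1..n}) j :
  (mdeg m <= m j)%N -> m = (U_(j) *+ m j)%MM.
Proof.
move=> deg_le; apply/mnmP => i; rewrite mulmnE mnm1E.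
have [<-|ne_ji] := eqVneq j i; first by rewrite mul1n.
rewrite mul0n; apply/eqP; rewrite -leqn0 -(leq_add2l (m j)) addn0.
apply: leq_trans deg_le.
by rewrite mdegE (bigD1 j) //= (bigD1 i) 1?eq_sym //= addnA leq_addr.
Qed.

Section FrobeniusReduction.
Variables (F : finFieldType) (n : nat).
Local Notation q := #|F|.

(* Since x ^+ q = x on F, this does not change the values of f; for a form of
   degree <= q it removes the only monomials with an exponent >= q. *)
Definition frob_reduce (f : {mpoly F[n]}) : {mpoly F[n]} :=
  f - \sum_(i < n) f@_(U_(i) *+ q) *: ('X_[U_(i) *+ q] - 'X_i).

Lemma meval_frob_reduce f x : (frob_reduce f).@[x] = f.@[x].
Proof.
rewrite mevalB (raddf_sum (meval x)) big1 ?subr0 //= => i _.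
by rewrite mevalZ mevalB -mpolyXn rmorphXn /= mevalXU expf_card subrr mulr0.
Qed.

Lemma mcoeff_frob_reduce f m :
  (frob_reduce f)@_m =
  f@_m - \sum_(i < n)
           f@_(U_(i) *+ q) * ((U_(i) *+ q == m)%MM%:R - (U_(i) == m)%MM%:R).
Proof.
rewrite mcoeffB (raddf_sum (mcoeff m)); congr (_ - _); apply: eq_bigr => i _.
by rewrite /= mcoeffZ mcoeffB !mcoeffX.
Qed.

Lemma mnmUq_eqU (i j : 'I_n) : (U_(i) *+ q == U_(j))%MM = false.
Proof.
apply/negP => /eqP /(congr1 mdeg); rewrite mdegMn !mdeg1 mul1n => q_eq1.
by move: (card_finNzRing_gt1 F); rewrite q_eq1.
Qed.

Lemma eq_mnm1_mulmn k (i j : 'I_n) :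
  (0 < k)%N -> (U_(i) *+ k == U_(j) *+ k)%MM = (i == j).
Proof.
move=> k_gt0; apply/idP/idP => [/eqP/mnmP/(_ j)|/eqP-> //].
rewrite !mulmnE !mnm1E eqxx mul1n; case: eqP => // _ /= k_eq0.
by rewrite -k_eq0 in k_gt0.
Qed.

Lemma mcoeff_frob_reduceU f j :
  (frob_reduce f)@_(U_(j)) = f@_(U_(j)) + f@_(U_(j) *+ q).
Proof.
rewrite mcoeff_frob_reduce (bigD1 j) //= big1 => [|i ne_ij]; last first.
  by rewrite mnmUq_eqU eq_mnm1 (negbTE ne_ij) subrr mulr0.
by rewrite mnmUq_eqU eqxx sub0r mulrN1 addr0 opprK.
Qed.

Lemma mcoeff_frob_reduceUq f j : (frob_reduce f)@_(U_(j) *+ q) = 0.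
Proof.
rewrite mcoeff_frob_reduce (bigD1 j) //= big1 => [|i ne_ij]; last first.
  rewrite eq_mnm1_mulmn ?(ltnW (card_finNzRing_gt1 F)) // (negbTE ne_ij).
  by rewrite eq_sym mnmUq_eqU subrr mulr0.
by rewrite eqxx eq_sym mnmUq_eqU subr0 mulr1 addr0 subrr.
Qed.

Lemma mcoeff_frob_reduce_id f m :
  (forall i, (U_(i) *+ q != m) && (U_(i) != m))%MM -> (frob_reduce f)@_m = f@_m.
Proof.
move=> m_neq; rewrite mcoeff_frob_reduce big1 ?subr0 // => i _.
by have /andP [/negbTE -> /negbTE ->] := m_neq i; rewrite subrr mulr0.
Qed.

Lemma frob_reduce_exps_lt f d :
  f \is d.-homog -> (d <= q)%N -> mexps_lt q (frob_reduce f).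
Proof.
move=> f_homog d_le m + i; rewrite mcoeff_msupp; apply: contraTT.
rewrite -leqNgt => q_le; have q_gt1 := card_finNzRing_gt1 F.
have [->|ne_m] := eqVneq m (U_(i) *+ q)%MM.
  by rewrite mcoeff_frob_reduceUq eqxx.
rewrite mcoeff_frob_reduce_id => [|k]; last first.
  have U_neq : (U_(k) != m)%MM.
    by apply: contraTneq q_le => <-; rewrite mnm1E -ltnNge (leq_ltn_trans (leq_b1 _)).
  have Uq_neq : (U_(k) *+ q != m)%MM.
    have [->|ne_ki] := eqVneq k i; first by rewrite eq_sym.
    apply: contraTneq q_le => <-.
    by rewrite mulmnE mnm1E (negbTE ne_ki) -ltnNge (ltnW q_gt1).
  by rewrite U_neq Uq_neq.
apply/negP; rewrite -mcoeff_msupp => m_f.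
have deg_m : mdeg m = d := dhomog_mf f_homog m_f.
have m_conc := mnm_concentrated (leq_trans (eq_leq deg_m) (leq_trans d_le q_le)).
have mi_eq : m i = q.
  have deg_mi : mdeg m = m i by rewrite {1}m_conc mdegMn mdeg1 mul1n.
  by apply/eqP; rewrite eqn_leq q_le andbT -deg_mi deg_m.
by move: ne_m; rewrite {1}m_conc mi_eq eqxx.
Qed.

Lemma frob_reduce_eq0 f d : f \is d.-homog -> frob_reduce f = 0 -> f = 0.
Proof.
move=> f_homog g_eq0.
have coefU0 j : f@_(U_(j)) = 0 /\ f@_(U_(j) *+ q) = 0.
  have coef_sum0 : f@_(U_(j)) + f@_(U_(j) *+ q) = 0.
    by rewrite -mcoeff_frob_reduceU g_eq0 mcoeff0.
  have [d_eq1|d_ne1] := eqVneq d 1%N.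
    have coefUq0 : f@_(U_(j) *+ q) = 0.
      apply: (dhomog_nemf_coeff f_homog).
      by rewrite /= mdegMn mdeg1 mul1n d_eq1 gtn_eqF ?(card_finNzRing_gt1 F).
    by move: coef_sum0; rewrite coefUq0 addr0.
  have coefU0 : f@_(U_(j)) = 0.
    by apply: (dhomog_nemf_coeff f_homog); rewrite /= mdeg1 eq_sym.
  by move: coef_sum0; rewrite coefU0 add0r.
apply/mpolyP => m; rewrite mcoeff0.
have [m_neq|] := boolP [forall i, (U_(i) *+ q != m) && (U_(i) != m)]%MM.
  by rewrite -mcoeff_frob_reduce_id ?g_eq0 ?mcoeff0 // => i; apply: (forallP m_neq).
rewrite negb_forall => /existsP [i]; rewrite negb_and !negbK.
by case/orP => /eqP <-; case: (coefU0 i).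
Qed.

Lemma homog_nonvanish f d :
  f \is d.-homog -> (d <= q)%N -> f != 0 -> exists x : 'I_n -> F, f.@[x] != 0.
Proof.
move=> f_homog d_le f_neq0.
have [/existsP [x fx_neq0]|/existsPn f_vanish] :=
  boolP [exists x : {ffun 'I_n -> F}, f.@[x] != 0]; first by exists x.
case/eqP: f_neq0; apply/(frob_reduce_eq0 f_homog).
apply: (mpoly_grid_vanishing_eq0 (enum_uniq F)).
  by rewrite -cardE; exact: frob_reduce_exps_lt d_le.
move=> x _; rewrite meval_frob_reduce -(meval_eq _ (ffunE x)).
by apply/eqP; rewrite -[_ == 0]negbK f_vanish.
Qed.

End FrobeniusReduction.

Lemma pboolP (P : Prop) : reflect P (pbool P).
Proof. by rewrite /pbool; case: excluded_middle_informative => p; constructor. Qed.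

Lemma meval_dhomogZ (R : comNzRingType) n d (f : {mpoly R[n]}) c (x : 'I_n -> R) :
  f \is d.-homog -> f.@[fun i => c * x i] = c ^+ d * f.@[x].
Proof.
move=> f_homog; rewrite !mevalE big_distrr /= !big_seq; apply: eq_bigr => m m_f.
under eq_bigr do rewrite exprMn.
by rewrite big_split /= prodrXr -mdegE (dhomog_mf f_homog m_f) mulrCA.
Qed.

Section ProjectiveZeros.
Variables (F : finFieldType) (m d : nat).
Local Notation q := #|F|.
Local Notation mpoly := {mpoly F[m.+1]}.

Lemma proj_normalize (x : 'I_m.+1 -> F) i0 : x i0 != 0 ->
  exists2 c : F, c != 0 & proj_normalized [ffun i => c * x i].
Proof.
move=> x_i0; have [i x_i i_min] := @arg_minnP _ i0 (fun i => x i != 0) val x_i0.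
exists (x i)^-1; first by rewrite invr_eq0.
apply/existsP; exists i; rewrite ffunE mulVf // eqxx /=.
apply/forallP => j; apply/implyP => lt_ji; rewrite ffunE.
suff /eqP -> : x j == 0 by rewrite mulr0.
by apply: contraTT lt_ji => x_j; rewrite -leqNgt i_min.
Qed.

Lemma homog_nonvanish_proj (f : mpoly) :
  f \is d.-homog -> (1 <= d <= q)%N -> f != 0 ->
  exists2 x, proj_normalized x & f.@[x] != 0.
Proof.
move=> f_homog /andP [d_gt0 d_le] /(homog_nonvanish f_homog d_le) [x fx_neq0].
have [i0 x_i0] : exists i0, x i0 != 0.
  apply/existsP; apply: contraNT fx_neq0 => /existsPn x_eq0.
  rewrite (meval_eq _ (v2 := fun i => 0 * x i)); last first.
    by move=> i; rewrite mul0r; apply/eqP/negPn.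
  by rewrite (meval_dhomogZ _ _ f_homog) expr0n gtn_eqF // mul0r.
have [c c_neq0 x_norm] := proj_normalize x_i0.
exists [ffun i => c * x i] => //.
by rewrite (meval_eq _ (ffunE _)) (meval_dhomogZ _ _ f_homog) mulf_neq0 ?expf_neq0.
Qed.

Definition common_zeros r (f : 'I_r -> mpoly) : {set {ffun 'I_m.+1 -> F}} :=
  [set x | proj_normalized x && [forall i, (f i).@[x] == 0]].

Lemma lin_indep_neq0 r (f : 'I_r -> mpoly) i : lin_indep f -> f i != 0.
Proof.
move=> f_indep; apply/eqP => f_i0.
have sum0 : \sum_(j < r) (j == i)%:R *: f j = 0.
  rewrite (bigD1 i) //= f_i0 scaler0 add0r big1 // => j /negbTE ->.
  by rewrite scale0r.
by have /eqP := f_indep _ sum0 i; rewrite eqxx oner_eq0.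
Qed.

Definition elim0 r (f : 'I_r.+1 -> mpoly) (x : 'I_m.+1 -> F) (i : 'I_r) : mpoly :=
  f (lift ord0 i) - ((f (lift ord0 i)).@[x] / (f ord0).@[x]) *: f ord0.

Lemma homog_family_elim0 r (f : 'I_r.+1 -> mpoly) x :
  homog_family d f -> homog_family d (elim0 f x).
Proof. by move=> f_homog i; rewrite rpredB ?rpredZ. Qed.

Lemma lin_indep_elim0 r (f : 'I_r.+1 -> mpoly) x :
  lin_indep f -> lin_indep (elim0 f x).
Proof.
move=> f_indep c c_sum i.
pose a i := (f (lift ord0 i)).@[x] / (f ord0).@[x].
pose c' j := if unlift ord0 j is Some i then c i else - \sum_(i < r) c i * a i.
suff /f_indep/(_ (lift ord0 i)) : \sum_(j < r.+1) c' j *: f j = 0.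
  by rewrite /c' liftK.
rewrite big_ord_recl /c' unlift_none -[RHS]c_sum.
rewrite (eq_bigr (fun j => c j *: f (lift ord0 j))) => [|j _]; last by rewrite liftK.
under [RHS]eq_bigr do rewrite scalerBr scalerA.
by rewrite sumrB -scaler_suml scaleNr addrC.
Qed.

Lemma common_zeros_elim0 r (f : 'I_r.+1 -> mpoly) x :
  proj_normalized x -> (f ord0).@[x] != 0 ->
  (#|common_zeros f| < #|common_zeros (elim0 f x)|)%N.
Proof.
move=> x_norm fx_neq0.
have x_notin : x \notin common_zeros f.
  by rewrite inE negb_and negb_forall; apply/orP; right; apply/existsP; exists ord0.
suff zeros_sub : x |: common_zeros f \subset common_zeros (elim0 f x).
  by apply: leq_trans (subset_leq_card zeros_sub); rewrite cardsU1 x_notin.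
apply/subsetP => y.
rewrite !inE => /orP [/eqP ->|/andP [y_norm /forallP y_zero]].
  by rewrite x_norm; apply/forallP => i; rewrite mevalB mevalZ divfK // subrr.
rewrite y_norm; apply/forallP => i.
by rewrite mevalB mevalZ (eqP (y_zero _)) (eqP (y_zero ord0)) mulr0 subrr.
Qed.

Lemma achievable_succ_lt r k : (1 <= d <= q)%N ->
  achievable F m d r.+1 k -> exists2 k', achievable F m d r k' & (k < k')%N.
Proof.
move=> d_range [f [f_homog f_indep <-]].
have [x x_norm fx_neq0] :=
  homog_nonvanish_proj (f_homog ord0) d_range (lin_indep_neq0 ord0 f_indep).
exists (nb_common_zeros (elim0 f x)); last exact: common_zeros_elim0.
by exists (elim0 f x); split; [apply: homog_family_elim0|apply: lin_indep_elim0|].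
Qed.

Lemma dhomog_span (f : 'I_('C(m + d, d)) -> mpoly) p :
  homog_family d f -> lin_indep f -> p \is d.-homog ->
  exists c : 'I_('C(m + d, d)) -> F, p = \sum_i c i *: f i.
Proof.
move=> f_homog f_indep p_homog.
pose X := [tuple DHomog (f_homog i) | i < 'C(m + d, d)].
have X_val (i : 'I_('C(m + d, d))) : val X`_i = f i by rewrite nth_mktuple.
have X_free : free X.
  apply/freeP => c c_sum i; apply: f_indep.
  under eq_bigr do rewrite -X_val -linearZ.
  by rewrite -linear_sum c_sum.
have X_basis : basis_of fullv X.
  (* [dhomog m.+1 F d] has dimension 'C(d + m, d) by construction. *)
  by rewrite basisEfree X_free subvf dimvf size_tuple /= addnC.
pose v := DHomog p_homog; exists (fun i => coord X i v).
transitivity (val v) => //; rewrite {1}(coord_basis X_basis (memvf v)).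
by rewrite linear_sum; apply: eq_bigr => i _; rewrite linearZ /= X_val.
Qed.

Lemma nb_common_zeros_full (f : 'I_('C(m + d, d)) -> mpoly) :
  homog_family d f -> lin_indep f -> nb_common_zeros f = 0%N.
Proof.
move=> f_homog f_indep; apply/eqP; rewrite cards_eq0; apply/eqP/setP => x.
rewrite inE in_set0; apply/negP.
move=> /andP [/existsP [i0 /andP [/eqP x_i0 _]] /forallP x_zero].
have Xd_homog : ('X_[U_(i0) *+ d] : mpoly) \is d.-homog.
  by rewrite dhomogX /= mdegMn mdeg1 mul1n.
have [c /(congr1 (meval x))] := dhomog_span f_homog f_indep Xd_homog.
rewrite -mpolyXn rmorphXn /= mevalXU x_i0 expr1n (raddf_sum (meval x)).
rewrite big1 => [|i _] /=.
  by move/eqP; rewrite oner_eq0.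
by rewrite mevalZ (eqP (x_zero i)) mulr0.
Qed.

End ProjectiveZeros.

Section MaxCommonZeros.
Variables (F : finFieldType) (m d : nat).
Local Notation q := #|F|.
Local Notation mpoly := {mpoly F[m.+1]}.

Lemma achievable_exists s : (s <= 'C(m + d, d))%N -> exists k, achievable F m d s k.
Proof.
move=> s_le.
pose b := [seq s2m t | t : d.-tuple 'I_m.+1 <- enum (basis m.+1 d)].
have b_size : size b = 'C(m + d, d) by rewrite size_basis addnC.
have b_uniq : uniq b := uniq_basis _ _.
have i_lt (i : 'I_s) : (i < size b)%N by rewrite b_size (leq_trans (ltn_ord i)).
pose f (i : 'I_s) : mpoly := 'X_[nth 0%MM b i].
exists (nb_common_zeros f), f; split=> // [i|c c_sum i].
  by rewrite dhomogX /= basis_cover mem_nth.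
have /(congr1 (mcoeff (nth 0%MM b i))) := c_sum.
rewrite (raddf_sum (mcoeff _)) mcoeff0 (bigD1 i) //= mcoeffZ mcoeffX eqxx mulr1.
rewrite big1 ?addr0 // => j ne_ji; rewrite /= mcoeffZ mcoeffX nth_uniq //.
by rewrite (inj_eq val_inj) (negbTE ne_ji) mulr0.
Qed.

Lemma nb_common_zeros_le r (f : 'I_r -> mpoly) : (nb_common_zeros f <= q ^ m.+1)%N.
Proof. by rewrite (leq_trans (max_card _)) // card_ffun card_ord. Qed.

Lemma achievable_lt r k : achievable F m d r k -> (k < (q ^ m.+1).+1)%N.
Proof. by case=> f [_ _ <-]; rewrite ltnS nb_common_zeros_le. Qed.

Lemma e_max_ge r k : achievable F m d r k -> (k <= e_max F r d m)%N.
Proof.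
move=> k_ach; have k_lt := achievable_lt k_ach.
exact: (leq_bigmax_cond (Ordinal k_lt) (introT (pboolP _) k_ach)).
Qed.

Lemma e_max_achievable r k :
  achievable F m d r k -> achievable F m d r (e_max F r d m).
Proof.
move=> k_ach; have k_lt := achievable_lt k_ach.
rewrite /e_max (bigop.bigmax_eq_arg (Ordinal k_lt)); last exact/pboolP.
by case: arg_maxnP => [|i /pboolP]; first exact/pboolP.
Qed.

End MaxCommonZeros.

Theorem corollary6p3 (F : finFieldType) (m d : nat) :
  (0 < m)%N -> (1 <= d <= #|F|)%N ->
  (forall r : nat, (1 <= r)%N -> (r < 'C(m + d, d))%N ->
     (e_max F r.+1 d m < e_max F r d m)%N)
  /\ e_max F 'C(m + d, d) d m = 0%N.
Proof.
move=> _ d_range; split=> [r _ r_lt|].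
  have [k k_ach] := achievable_exists F r_lt.
  have [k' k'_ach lt_k'] := achievable_succ_lt d_range (e_max_achievable k_ach).
  exact: leq_trans lt_k' (e_max_ge k'_ach).
have [k k_ach] := achievable_exists F (leqnn 'C(m + d, d)).
have [f [f_homog f_indep <-]] := e_max_achievable k_ach.
exact: nb_common_zeros_full.
Qed.
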